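(* If an additive integrator map $\psi$ is $N$-affine equivariant, then the partitioned integrator map defined by $\phi(f)=\psi(f^{[1]},\ldots,f^{[N]})$ is P-affine equivariant.
   Context: All spaces are real Banach spaces; $\mathfrak X(Y)$ denotes smooth vector fields on $Y$. For fixed $N$, an additive integrator map $\psi$ is a collection of smooth maps $\psi_Y\colon\mathfrak X(Y)^N\to\mathfrak X(Y)$, one per Banach space $Y$. It is $N$-affine equivariant if for every affine map $A$ between Banach spaces, $f^{[\nu]}\sim_A g^{[\nu]}$ for all $\nu$ implies $\psi(f^{[1]},\ldots,f^{[N]})\sim_A\psi(g^{[1]},\ldots,g^{[N]})$, where $f\sim_\chi g$ means $\chi'(y)f(y)=g(\chi(y))$ for all $y$. A partitioned Banach space is $Y=Y^{[1]}\oplus\cdots\oplus Y^{[N]}$; for $f\in\mathfrak X(Y)$, $f^{[\nu]}$ denotes the vector field on $Y$ obtained by keeping only the $Y^{[\nu]}$-component of $f$, so $f=f^{[1]}+\cdots+f^{[N]}$ is uniquely determined by the partition. A partitioned integrator map is a collection of smooth maps $\phi\colon\mathfrak X(Y)\to\mathfrak X(Y)$, one for each partitioned Banach space. A map $A\colon Y\to U$ between partitioned spaces is P-affine if $A=\bigoplus_\nu A^{[\nu]}$ with each $A^{[\nu]}\colon Y^{[\nu]}\to U^{[\nu]}$ affine; a partitioned integrator map is P-affine equivariant if $f\sim_A g$ implies $\phi(f)\sim_A\phi(g)$ for all P-affine $A$. *)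

From HB Require Import structures.
From mathcomp Require Import all_boot all_order all_algebra.
From mathcomp Require Import all_classical all_reals all_analysis.
Set Implicit Arguments. Unset Strict Implicit. Unset Printing Implicit Defensive.
Import Order.TTheory GRing.Theory Num.Theory.
Import numFieldNormedType.Exports.
Local Open Scope ring_scope.

Section Defs.
Variable R : realType.

Definition iterD (V W : normedModType R) (f : V -> W) (vs : seq V) : V -> W :=
  foldr (fun v g => fun x => derive g x v) f vs.

(* Smoothness (C^infinity) in the Michal--Bastiani sense: all iterated
   directional derivatives exist and (x, v1, ..., vk) |-> d^k f(x)(v1..vk) is
   jointly continuous.  On Banach spaces this coincides with Frechet C^infinity. *)
Definition smooth (V W : normedModType R) (f : V -> W) : Prop :=
  forall vs : seq V,
    (forall x v, derivable (iterD f vs) x v) /\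
    (forall x (e : R), 0 < e -> exists2 d : R, 0 < d &
       forall x' (ws : seq V), size ws = size vs -> `|x - x'| < d ->
         (forall i, (i < size vs)%N -> `|nth 0 vs i - nth 0 ws i| < d) ->
         `|iterD f vs x - iterD f ws x'| < e).

Definition is_affine (V W : normedModType R) (A : V -> W) : Prop :=
  exists (L : {linear V -> W}) (b : W), continuous L /\ forall y, A y = L y + b.

Definition related (V W : normedModType R) (chi : V -> W) (f : V -> V) (g : W -> W)
  : Prop := forall y, 'd chi y (f y) = g (chi y).

Definition additive_integrator (N : nat) :=
  forall Y : completeNormedModType R, ('I_N -> Y -> Y) -> Y -> Y.

Definition N_affine_equivariant (N : nat) (psi : additive_integrator N) : Prop :=
  forall (Y U : completeNormedModType R) (A : Y -> U), is_affine A ->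
  forall (f : 'I_N -> Y -> Y) (g : 'I_N -> U -> U),
    (forall nu, smooth (f nu)) -> (forall nu, smooth (g nu)) ->
    (forall nu, related A (f nu) (g nu)) ->
    related A (psi Y f) (psi U g).

(* A partition Y = Y^[1] (+) ... (+) Y^[N] of a Banach space, given by the
   continuous projections P_nu onto Y^[nu] along the other summands. *)
Record partition (N : nat) (Y : completeNormedModType R) := Partition {
  pproj : 'I_N -> {linear Y -> Y};
  pproj_cont : forall nu, continuous (pproj nu);
  pproj_sum : forall y, \sum_(nu < N) pproj nu y = y;
  pproj_orth : forall nu mu y,
    pproj nu (pproj mu y) = if nu == mu then pproj mu y else 0
}.

Definition component (N : nat) (Y : completeNormedModType R) (pY : partition N Y)
  (f : Y -> Y) (nu : 'I_N) : Y -> Y := fun y => pproj pY nu (f y).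

(* A = (+)_nu A^[nu], A^[nu] : Y^[nu] -> U^[nu] affine.  A^[nu] is represented
   by an affine map B nu : Y -> U with values in U^[nu], restricted to Y^[nu]. *)
Definition P_affine (N : nat) (Y U : completeNormedModType R)
  (pY : partition N Y) (pU : partition N U) (A : Y -> U) : Prop :=
  exists B : 'I_N -> Y -> U,
    (forall nu, is_affine (B nu)) /\
    (forall nu y, pproj pU nu (B nu y) = B nu y) /\
    (forall y, A y = \sum_(nu < N) B nu (pproj pY nu y)).

Definition partitioned_of (N : nat) (psi : additive_integrator N)
  (Y : completeNormedModType R) (pY : partition N Y) (f : Y -> Y) : Y -> Y :=
  psi Y (component pY f).

Definition P_affine_equivariant (N : nat)
  (phi : forall Y : completeNormedModType R, partition N Y -> (Y -> Y) -> Y -> Y)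
  : Prop :=
  forall (Y U : completeNormedModType R) (pY : partition N Y) (pU : partition N U)
    (A : Y -> U), P_affine pY pU A ->
  forall (f : Y -> Y) (g : U -> U), smooth f -> smooth g ->
    related A f g -> related A (phi Y pY f) (phi U pU g).

End Defs.

(** A P-affine map [A = (+)_nu A^[nu]] is affine, and since it acts block-diagonally its
    derivative intertwines the two families of projections.  Hence [f ~_A g] implies
    [f^[nu] ~_A g^[nu]] for every [nu]; the components are smooth because projections are
    continuous linear maps, so [N]-affine equivariance of [psi] applies directly. *)
From Pilot Require Import Defs.
From HB Require Import structures.
From mathcomp Require Import all_boot all_order all_algebra.
From mathcomp Require Import all_classical all_reals all_analysis.
Set Implicit Arguments. Unset Strict Implicit. Unset Printing Implicit Defensive.
Import Order.TTheory GRing.Theory Num.Theory.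
Import numFieldNormedType.Exports.
Local Open Scope classical_set_scope.
Local Open Scope ring_scope.

Section LinearComp.
Variables (R : realType) (V W X : normedModType R).
Variables (P : {linear W -> X}) (P_cont : continuous P).

Lemma is_derive_linear_comp (h : V -> W) x v dh :
  is_derive x v h dh -> is_derive x v (P \o h) (P dh).
Proof.
move=> [h_der <-].
have quotP : (fun t : R => t^-1 *: ((P \o h \o shift x) (t *: v) - (P \o h) x)) =
    P \o (fun t : R => t^-1 *: ((h \o shift x) (t *: v) - h x)).
  by apply: funext => t /=; rewrite linearZZ [P (_ - _)]linearB.
have cvgP : (fun t : R => t^-1 *: ((P \o h \o shift x) (t *: v) - (P \o h) x))
    @ 0^' --> P (derive h x v).
  by rewrite quotP; apply: continuous_cvg; [exact: P_cont | exact: h_der].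
by apply: DeriveDef; [apply/cvg_ex; exists (P (derive h x v)) | exact: cvg_lim].
Qed.

Lemma iterD_linear_comp (h : V -> W) (vs : seq V) :
  (forall us x u, derivable (Defs.iterD h us) x u) ->
  Defs.iterD (P \o h) vs = P \o Defs.iterD h vs.
Proof.
move=> h_der; elim: vs => [//|v vs IH] /=.
apply: funext => x /=; rewrite IH.
by have [_ ->] := is_derive_linear_comp (DeriveDef (h_der vs x v) erefl).
Qed.

Lemma smooth_linear_comp (h : V -> W) : smooth h -> smooth (P \o h).
Proof.
move=> h_smooth vs.
have h_der us x u : derivable (Defs.iterD h us) x u by have [] := h_smooth us.
rewrite !iterD_linear_comp //; split.
  by move=> x v; have [] := is_derive_linear_comp (DeriveDef (h_der vs x v) erefl).
move=> x e e_gt0.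
have [k k_gt0 P_lip] := linear_lipschitz P_cont.
have [d d_gt0 h_cont] := proj2 (h_smooth vs) x (e / k) (divr_gt0 e_gt0 k_gt0).
exists d => // x' ws size_ws x'_near ws_near.
rewrite iterD_linear_comp //= -linearB.
apply: le_lt_trans (P_lip _) _.
by rewrite -ltr_pdivlMl // mulrC; exact: h_cont.
Qed.

End LinearComp.

Section Affine.
Variable R : realType.
Implicit Types V W X : normedModType R.

Lemma affine_diff V W (A : V -> W) : is_affine A ->
  forall y v, 'd A y v = A v - A 0.
Proof.
move=> [L [b [L_cont AE]]] y v.
have -> : A v - A 0 = L v by rewrite !AE linear0 add0r addrK.
have -> : A = (L : V -> W) + cst b by apply: funext => w; rewrite AE.
rewrite diffD ?diff_lin ?diff_cst //=; last exact: linear_differentiable.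
by rewrite addr0.
Qed.

Lemma is_affine_cst0 V W : is_affine (fun _ : V => 0 : W).
Proof. by exists \0, 0; split => [|y]; [exact: cst_continuous | rewrite addr0]. Qed.

Lemma is_affineD V W (A1 A2 : V -> W) :
  is_affine A1 -> is_affine A2 -> is_affine (A1 \+ A2).
Proof.
move=> [L1 [b1 [L1_cont A1E]]] [L2 [b2 [L2_cont A2E]]].
exists (L1 \+ L2), (b1 + b2); split => [x|y]; last by rewrite /= A1E A2E addrACA.
by apply: continuousD; [exact: L1_cont | exact: L2_cont].
Qed.

Lemma is_affine_sum V W n (F : 'I_n -> V -> W) :
  (forall i, is_affine (F i)) -> is_affine (fun y => \sum_(i < n) F i y).
Proof.
elim: n F => [|n IH] F F_aff.
  by under [fun y => _]funext do rewrite big_ord0; exact: is_affine_cst0.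
under [fun y => _]funext do rewrite big_ord_recr.
by apply: is_affineD; [exact: IH | exact: F_aff].
Qed.

Lemma is_affine_comp_linear V W X (B : W -> X) (P : {linear V -> W}) :
  continuous P -> is_affine B -> is_affine (B \o P).
Proof.
move=> P_cont [L [b [L_cont BE]]].
exists (L \o P), b; split => [|y]; last exact: BE.
by move=> y; apply: continuous_comp; [exact: P_cont | exact: L_cont].
Qed.

End Affine.

Section Partitioned.
Variables (R : realType) (N : nat).

Lemma pprojK (Y : completeNormedModType R) (p : Defs.partition N Y) nu y :
  pproj p nu (pproj p nu y) = pproj p nu y.
Proof. by rewrite pproj_orth eqxx. Qed.

Lemma pproj_summand (Y : completeNormedModType R) (p : Defs.partition N Y) mu nu y :
  pproj p mu y = y -> pproj p nu y = if nu == mu then y else 0.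
Proof. by move=> <-; rewrite pproj_orth. Qed.

Variables (Y U : completeNormedModType R).
Variables (pY : Defs.partition N Y) (pU : Defs.partition N U).

Lemma smooth_component (f : Y -> Y) nu : smooth f -> smooth (component pY f nu).
Proof. exact/smooth_linear_comp/pproj_cont. Qed.

Lemma P_affine_is_affine (A : Y -> U) : P_affine pY pU A -> is_affine A.
Proof.
move=> [B [B_aff [_ AE]]].
have -> : A = fun y => \sum_(nu < N) (B nu \o pproj pY nu) y by apply: funext.
by apply: is_affine_sum => nu; apply: is_affine_comp_linear; [exact: pproj_cont|].
Qed.

Lemma P_affine_pproj (A : Y -> U) : P_affine pY pU A ->
  forall nu v, A (pproj pY nu v) - A 0 = pproj pU nu (A v - A 0).
Proof.
move=> [B [_ [B_in AE]]] nu v.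
rewrite !AE -!sumrB linear_sum; apply: eq_bigr => mu _.
rewrite linear0 linearB; case: (eqVneq mu nu) => [-> | mu_nu].
  by rewrite pprojK !B_in.
rewrite pproj_orth (negbTE mu_nu) subrr.
by rewrite !(pproj_summand nu (B_in mu _)) eq_sym (negbTE mu_nu) subrr.
Qed.

Lemma related_component (A : Y -> U) (f : Y -> Y) (g : U -> U) nu :
  P_affine pY pU A -> related A f g ->
  related A (component pY f nu) (component pU g nu).
Proof.
move=> A_P fg y; rewrite /component.
have A_aff := P_affine_is_affine A_P.
by rewrite (affine_diff A_aff) P_affine_pproj // -(affine_diff A_aff y) fg.
Qed.

End Partitioned.

Theorem proposition4p14 (R : realType) (N : nat) (psi : additive_integrator R N) :
  N_affine_equivariant psi ->
  P_affine_equivariant (@partitioned_of R N psi).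
Proof.
move=> psi_equiv Y U pY pU A A_P f g f_smooth g_smooth fg.
apply: psi_equiv => [|nu|nu|nu].
- exact: P_affine_is_affine A_P.
- exact: smooth_component.
- exact: smooth_component.
- exact: related_component.
Qed.
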